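(* Let $G$ be a group, $n\ge2$, $X=\{x_1,\dots,x_n\}$, fix a function $X\to G$, and let $(\mathcal X_l)_{l\ge1}$ be a non-backtracking random walk on $(G,X)$. If the Markov chain $(\mathcal X_l)$ on $\Omega$ is irreducible, then its period is either $1$ or $2$.
   Context: Let $G$ be a group, $X=\{x_1,\dots,x_n\}$ a set with $n\ge 2$, and fix a function $X\to G$; we identify each $x_i$ with its image in $G$. Let $\Omega=G\times\{\pm1,\pm2,\dots,\pm n\}$, with elements written $(g,\epsilon i)$, $g\in G$, $\epsilon=\pm1$, $i\in\{1,\dots,n\}$. A non-backtracking random walk on $(G,X)$ is a Markov chain $(\mathcal X_l)_{l\ge1}$ on $\Omega$ with transition probabilities $\mathbb P(\mathcal X_{l+1}=(g,\epsilon i)\mid \mathcal X_l=(h,\epsilon' j))=\alpha_{\epsilon' j,\epsilon i}$ if $g=hx_i^{\epsilon}$ and $\epsilon i\neq -\epsilon' j$, and $=0$ otherwise, where the $\alpha_{\epsilon' j,\epsilon i}$ are positive constants with $\sum_{\epsilon i\neq-\epsilon' j}\alpha_{\epsilon' j,\epsilon i}=1$ for each $\epsilon' j$; and with initial distribution $\mathbb P(\mathcal X_1=(g,\epsilon i))=\beta_{\epsilon i}$ if $g=x_i^{\epsilon}$ and $0$ otherwise, for positive constants $\beta_{\epsilon i}$ summing to $1$. Irreducibility and period refer to the Markov chain on the full state space $\Omega$. *)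

From HB Require Import structures.
From mathcomp Require Import all_boot all_order all_algebra.
From Stdlib Require Import ClassicalDescription.
Set Implicit Arguments. Unset Strict Implicit. Unset Printing Implicit Defensive.
Import Order.TTheory GRing.Theory Num.Theory.
Local Open Scope ring_scope.

(* A letter eps*i in {+-1,...,+-n}: (i, b) with i : 'I_n (i.e. index i+1)
   and b = true for eps = +1, b = false for eps = -1. *)
Definition letter (n : nat) := ('I_n * bool)%type.

Definition opp_letter n (t : letter n) : letter n := (t.1, ~~ t.2).

Section NBRW.
Variables (R : realFieldType) (G : Type) (mul : G -> G -> G) (inv : G -> G).
Variables (n : nat) (x : 'I_n -> G) (alpha : letter n -> letter n -> R).

Definition gen (s : letter n) : G := if s.2 then x s.1 else inv (x s.1).

Definition state := (G * letter n)%type.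

Definition delta (T : Type) (a b : T) : R :=
  if excluded_middle_informative (a = b) then 1 else 0.

Definition P (w w' : state) : R :=
  if excluded_middle_informative
       (w'.2 != opp_letter w.2 /\ w'.1 = mul w.1 (gen w'.2))
  then alpha w.2 w'.2 else 0.

Definition succ (w : state) (s : letter n) : state := (mul w.1 (gen s), s).

(* l-step transition probabilities P^l(w, w'); since P(w, .) vanishes outside
   the finite set {succ w s | s letter}, the Chapman-Kolmogorov sum is finite *)
Fixpoint Pn (l : nat) (w w' : state) : R :=
  match l with
  | 0 => delta w w'
  | l'.+1 => \sum_(s : letter n) P w (succ w s) * Pn l' (succ w s) w'
  end.

Definition irreducible : Prop :=
  forall w w' : state, exists l : nat, 0 < Pn l w w'.

Definition is_period (w : state) (d : nat) : Prop :=
  (forall l : nat, (0 < l)%N -> 0 < Pn l w w -> (d %| l)%N) /\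
  (forall e : nat, (forall l : nat, (0 < l)%N -> 0 < Pn l w w -> (e %| l)%N) ->
     (e %| d)%N).
End NBRW.

From HB Require Import structures.
From mathcomp Require Import all_boot all_order all_algebra.
From Stdlib Require Import ClassicalDescription.
From mathcomp Require Import zify.
Import Order.TTheory GRing.Theory Num.Theory.
Local Open Scope ring_scope.

(* Let e divide the length of every closed walk through w in a strongly
   connected graph. Two walks between the same endpoints then have lengths
   congruent mod e, so for states u, u' that both step into v and v' we get
   l(u,v) + l(u',v') = l(u',v) + l(u,v') mod e. A non-backtracking walk
   offers such a square with lengths 2, 1, 1, 2: from (g, x_j) and
   (g x_i^-1, x_j), the letter x_i^-1 leads in 2 and 1 steps to the same
   state, and the letter x_i leads in 1 and 2 steps to the same state (the
   second walk passes through (g, x_i)). Hence e divides 4 - 2 = 2.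
   Only the positivity of the alpha's matters. *)

Set Implicit Arguments.
Unset Strict Implicit.
Unset Printing Implicit Defensive.

Lemma psumr_gt0 (R : numDomainType) (I : finType) (F : I -> R) :
  (forall i, 0 <= F i) -> (0 < \sum_i F i) = [exists i, 0 < F i].
Proof.
move=> F_ge0; rewrite lt0r psumr_neq0 // sumr_ge0 // andbT.
by apply/hasP/existsP => [[i _ /= Fi]|[i Fi]]; exists i; rewrite ?mem_index_enum.
Qed.

Section Walks.
Variables (T : Type) (step : T -> T -> Prop).

Fixpoint walk (l : nat) (u v : T) : Prop :=
  if l is l'.+1 then exists2 u', step u u' & walk l' u' v else u = v.

Lemma walk1 u v : step u v -> walk 1 u v.
Proof. by exists v. Qed.

Lemma walk_cat l m u z v : walk l u z -> walk m z v -> walk (l + m) u v.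
Proof.
elim: l u => [|l IHl] u /=; first by move=> ->.
by case=> u' Huu' Hu'z Hzv; exists u'; last exact: IHl Hu'z Hzv.
Qed.

Variables (w : T) (e : nat).
Hypothesis strongly_connected : forall u v, exists l, walk l u v.
Hypothesis dvdn_returns : forall l, walk l w w -> (e %| l)%N.

Lemma walk_square_eqmod l1 l2 l3 l4 u u' v v' :
  walk l1 u v -> walk l2 u' v -> walk l3 u v' -> walk l4 u' v' ->
  (l1 + l4 = l2 + l3 %[mod e])%N.
Proof.
move=> W1 W2 W3 W4.
have [[p Wp] [p' Wp']] := (strongly_connected w u, strongly_connected w u').
have [[q Wq] [q' Wq']] := (strongly_connected v w, strongly_connected v' w).
have /dvdn_add/(_ (dvdn_returns (walk_cat (walk_cat Wp' W4) Wq'))) :=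
  dvdn_returns (walk_cat (walk_cat Wp W1) Wq).
have /dvdn_add/(_ (dvdn_returns (walk_cat (walk_cat Wp W3) Wq'))) :=
  dvdn_returns (walk_cat (walk_cat Wp' W2) Wq).
rewrite /dvdn => /eqP E23 /eqP E14; apply/eqP.
rewrite -(eqn_modDr (p + p' + q + q')).
have -> : (l1 + l4 + (p + p' + q + q') = p + l1 + q + (p' + l4 + q'))%N by lia.
have -> : (l2 + l3 + (p + p' + q + q') = p' + l2 + q + (p + l3 + q'))%N by lia.
by rewrite E14 E23.
Qed.

Lemma dvdn2_of_walk_square u u' v v' :
  walk 2 u v -> walk 1 u' v -> walk 1 u v' -> walk 2 u' v' -> (e %| 2)%N.
Proof.
move=> W1 W2 W3 W4.
have /eqP : (2 + 2 = 0 + 2 %[mod e])%N := walk_square_eqmod W1 W2 W3 W4.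
by rewrite eqn_modDr mod0n.
Qed.

End Walks.

Section NonBacktracking.
Variables (R : realFieldType) (G : Type) (mul : G -> G -> G) (inv : G -> G).
Variables (n : nat) (x : 'I_n -> G) (alpha : letter n -> letter n -> R).
Hypothesis alpha_pos : forall t s : letter n, s != opp_letter t -> 0 < alpha t s.

Local Notation succ := (succ mul inv x).
Local Notation P := (P mul inv x alpha).
Local Notation Pn := (Pn mul inv x alpha).

Definition nb_step (u v : state G n) : Prop :=
  exists2 s, s != opp_letter u.2 & v = succ u s.

Lemma P_succ u s : P u (succ u s) = if s != opp_letter u.2 then alpha u.2 s else 0.
Proof.
rewrite /P; case: excluded_middle_informative => /= [[s_ok _]|nP].
  by rewrite s_ok.
by case: ifP => // s_ok; case: nP; rewrite s_ok.
Qed.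

Lemma P_succ_ge0 u s : 0 <= P u (succ u s).
Proof. by rewrite P_succ; case: ifP => // /alpha_pos/ltW. Qed.

Lemma P_succ_gt0 u s : (0 < P u (succ u s)) = (s != opp_letter u.2).
Proof. by rewrite P_succ; case: ifP => [/alpha_pos|]; rewrite ?ltxx. Qed.

Lemma Pn_ge0 l u v : 0 <= Pn l u v.
Proof.
elim: l u => [|l IHl] u /=; first by rewrite /delta; case: excluded_middle_informative.
by apply: sumr_ge0 => s _; rewrite mulr_ge0 ?P_succ_ge0.
Qed.

Lemma Pn_gt0_walk l u v : 0 < Pn l u v <-> walk nb_step l u v.
Proof.
elim: l u => [|l IHl] u /=.
  by rewrite /delta; case: excluded_middle_informative => uv; rewrite ?ltr01 ?ltxx.
rewrite psumr_gt0 => [|s]; last by rewrite mulr_ge0 ?P_succ_ge0 ?Pn_ge0.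
have term_gt0 s : (0 < P u (succ u s) * Pn l (succ u s) v) =
    (s != opp_letter u.2) && (0 < Pn l (succ u s) v).
  by rewrite mulr_ge0_gt0 ?P_succ_ge0 ?Pn_ge0 ?P_succ_gt0.
split=> [/existsP[s]|[_ [s s_ok ->] /IHl W]].
  by rewrite term_gt0 => /andP[s_ok /IHl W]; exists (succ u s) => //; exists s.
by apply/existsP; exists s; rewrite term_gt0 s_ok.
Qed.

Lemma nb_walk_square (i j : 'I_n) (g : G) :
  (forall a b, mul (mul a (inv b)) b = a) -> i != j ->
  exists u u' v v', [/\ walk nb_step 2 u v, walk nb_step 1 u' v,
                        walk nb_step 1 u v' & walk nb_step 2 u' v'].
Proof.
move=> mulgVK ij.
have turn h p q : nb_step (h, (j, q)) (succ (h, (j, q)) (i, p)).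
  by exists (i, p); rewrite //= xpair_eqE negb_and ij.
have straight h p : nb_step (h, (i, p)) (succ (h, (i, p)) (i, p)).
  by exists (i, p); rewrite //= xpair_eqE eqxx; case: p.
pose u : state G n := (g, (j, true)).
pose u' : state G n := ((succ u (i, false)).1, (j, true)).
have u'_to_gi : succ u' (i, true) = (g, (i, true)) by rewrite /succ /= mulgVK.
exists u, u', (succ (succ u (i, false)) (i, false)), (succ u (i, true)); split.
- by exists (succ u (i, false)); [exact: turn | exact/walk1/straight].
- exact/walk1/turn.
- exact/walk1/turn.
- exists (g, (i, true)); first by rewrite -u'_to_gi; exact: turn.
  exact/walk1/straight.
Qed.

Lemma is_period_1_or_2 w :
  (forall e, (forall l, (0 < l)%N -> 0 < Pn l w w -> (e %| l)%N) -> (e %| 2)%N) ->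
  is_period mul inv x alpha w 1 \/ is_period mul inv x alpha w 2.
Proof.
move=> dvdn2_returns.
have [[l [l_gt0 Pl odd_l]] | no_odd] :=
  classic (exists l, [/\ (0 < l)%N, 0 < Pn l w w & odd l]).
  left; split=> [l' _ _ | e e_returns]; first exact: dvd1n.
  have /eqP <- : coprime l 2 by rewrite coprimen2.
  by rewrite dvdn_gcd e_returns // dvdn2_returns.
right; split=> // l l_gt0 Pl; rewrite dvdn2; apply/negP => odd_l.
by apply: no_odd; exists l.
Qed.

End NonBacktracking.

Theorem mainTheorem2
  (R : realFieldType)
  (G : Type) (mul : G -> G -> G) (one : G) (inv : G -> G)
  (mulA : forall a b c, mul a (mul b c) = mul (mul a b) c)
  (mul1g : forall a, mul one a = a) (mulg1 : forall a, mul a one = a)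
  (mulVg : forall a, mul (inv a) a = one) (mulgV : forall a, mul a (inv a) = one)
  (n : nat) (hn : (2 <= n)%N) (x : 'I_n -> G)
  (alpha : letter n -> letter n -> R)
  (alpha_pos : forall t s : letter n, s != opp_letter t -> 0 < alpha t s)
  (alpha_sum : forall t : letter n,
      \sum_(s : letter n | s != opp_letter t) alpha t s = 1)
  (beta : letter n -> R)
  (beta_pos : forall s : letter n, 0 < beta s)
  (beta_sum : \sum_(s : letter n) beta s = 1)
  (Hirr : irreducible mul inv x alpha) :
  forall w : state G n,
    is_period mul inv x alpha w 1 \/ is_period mul inv x alpha w 2.
Proof.
move=> w; apply: is_period_1_or_2 => e e_returns.
have walkP l u v := Pn_gt0_walk mul inv x alpha_pos l u v.
have connected u v : exists l, walk (nb_step mul inv x) l u v.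
  by have [l /walkP] := Hirr u v; exists l.
have dvdn_returns l : walk (nb_step mul inv x) l w w -> (e %| l)%N.
  by case: l => [|l] // /walkP; apply: e_returns.
have mulgVK a b : mul (mul a (inv b)) b = a by rewrite -mulA mulVg mulg1.
have i01 : Ordinal (ltnW hn) != Ordinal hn by [].
have [u [u' [v [v' [W1 W2 W3 W4]]]]] := nb_walk_square x one mulgVK i01.
exact: (dvdn2_of_walk_square connected dvdn_returns W1 W2 W3 W4).
Qed.
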